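(* Let $E\subseteq\mathbb R^2$ be a bounded domain. For every $U\subseteq E$ satisfying $|U|\ge|E|(1-\frac{A(E)}4)$ we have $A(U)\ge\frac{A(E)}4$.
   Context: For a bounded set $E\subseteq\mathbb R^2$ of positive measure, the Fraenkel asymmetry is $A(E)=\inf\{|E\triangle(x_0+rB)|/|E|: x_0\in\mathbb R^2,\ \pi r^2=|E|\}\in[0,1]$, where $B$ is the unit disk and $\triangle$ denotes symmetric difference. *)

From HB Require Import structures.
From mathcomp Require Import all_boot all_order all_algebra.
From mathcomp Require Import all_classical all_reals all_analysis.
Set Implicit Arguments. Unset Strict Implicit. Unset Printing Implicit Defensive.
Import Order.TTheory GRing.Theory Num.Theory.
Import numFieldNormedType.Exports.
Local Open Scope classical_set_scope.
Local Open Scope ring_scope.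

Definition leb2 (R : realType) : set (R * R) -> \bar R :=
  ((@lebesgue_measure R) \x (@lebesgue_measure R))%E.

Definition symdiff T (A B : set T) : set T := (A `\` B) `|` (B `\` A).

Definition disk (R : realType) (x0 : R * R) (r : R) : set (R * R) :=
  [set p | (p.1 - x0.1) ^+ 2 + (p.2 - x0.2) ^+ 2 < r ^+ 2].

(* Fraenkel asymmetry of E (finite positive measure assumed where used):
   inf over x0 and r with pi r^2 = |E| of |E Δ (x0 + r B)| / |E| *)
Definition asym (R : realType) (E : set (R * R)) : R :=
  inf [set a | exists (x0 : R * R) (r : R),
         0 <= r /\ pi * r ^+ 2 = fine (leb2 E) /\
         a = fine (leb2 (symdiff E (disk x0 r))) / fine (leb2 E)].

Definition bounded2 (R : realType) (E : set (R * R)) : Prop :=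
  exists M : R, forall p, E p -> `|p.1| <= M /\ `|p.2| <= M.

From HB Require Import structures.
From mathcomp Require Import all_boot all_order all_algebra.
From mathcomp Require Import all_classical all_reals all_analysis.
From mathcomp Require Import ring lra.
Import Order.TTheory GRing.Theory Num.Theory.
Import numFieldNormedType.Exports.
Local Open Scope classical_set_scope.
Local Open Scope ring_scope.
Set Implicit Arguments. Unset Strict Implicit. Unset Printing Implicit Defensive.

(* Let D and D' be concentric disks with |D| = |U| and |D'| = |E|.  Since
   U is inside E and D inside D', the triangle inequality for the symmetric
   difference gives
     A(E) |E| <= |E Δ D'| <= |E Δ U| + |U Δ D| + |D Δ D'|
                          = 2 (|E| - |U|) + |U Δ D|,
   so the hypothesis |E| - |U| <= A(E) |E| / 4 leaves
   |U Δ D| >= A(E) |E| / 2 >= A(E) |U| / 2 for every admissible D, that is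
   A(U) >= A(E) / 2.
   Identifying |D| and |D'| requires the area pi r^2 of a disk, obtained by
   integrating its chord lengths 2 sqrt (r^2 - (x - a)^2), which have the
   primitive (x - a) sqrt (r^2 - (x - a)^2) + r^2 asin ((x - a) / r). *)

Section measure_setY.
Context d (T : measurableType d) (R : realType) (mu : {measure set T -> \bar R}).
Implicit Types A B C D : set T.
Local Open Scope ereal_scope.

Lemma measurableY A B : measurable A -> measurable B -> measurable (A `+` B).
Proof. by move=> mA mB; apply: measurableU; exact: measurableD. Qed.

Lemma measureY_le A B : measurable A -> measurable B ->
  mu (A `+` B) <= mu A + mu B.
Proof.
move=> mA mB; apply: le_trans (measureU2 mu mA mB).
apply: le_measure; rewrite ?inE; [exact: measurableY|exact: measurableU|].
by move=> x [[]|[]]; [left|right].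
Qed.

Lemma measureY_triangle A B C : measurable A -> measurable B -> measurable C ->
  mu (A `+` C) <= mu (A `+` B) + mu (B `+` C).
Proof.
move=> mA mB mC; have -> : A `+` C = (A `+` B) `+` (B `+` C).
  by rewrite setYA -(setYA A) setYK setY0.
by apply: measureY_le; exact: measurableY.
Qed.

Lemma measureY_subset A B : measurable A -> measurable B -> B `<=` A ->
  mu A < +oo -> mu (A `+` B) = mu A - mu B.
Proof.
move=> mA mB BA muA.
rewrite /setY (_ : B `\` A = set0) ?setU0; last by rewrite setD_eq0.
by rewrite measureD // (setIidr BA).
Qed.

Lemma measureY_nested A B C D :
  measurable A -> measurable B -> measurable C -> measurable D ->
  B `<=` A -> D `<=` C -> mu A < +oo -> mu C < +oo ->
  mu (A `+` C) <= (mu A - mu B) + mu (B `+` D) + (mu C - mu D).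
Proof.
move=> mA mB mC mD BA DC muA muC.
rewrite -(measureY_subset mA mB) // -(measureY_subset mC mD) //.
rewrite (setYC C) -addeA; apply: le_trans (measureY_triangle mA mB mC) _.
by rewrite leeD2l // measureY_triangle.
Qed.

End measure_setY.

Section plane_measurable.
Context (R : realType).
Implicit Types E : set (R * R).

Definition rat_box (q1 q2 : rat) (n : nat) : set (R * R) :=
  `](ratr q1 - n.+1%:R^-1), (ratr q1 + n.+1%:R^-1)[ `*`
  `](ratr q2 - n.+1%:R^-1), (ratr q2 + n.+1%:R^-1)[.

Lemma open_rat_box_cover E p : open E -> E p ->
  exists q1 q2 n, rat_box q1 q2 n p /\ rat_box q1 q2 n `<=` E.
Proof.
move=> oE Ep; have /nbhs_ballP[e e0 pE] : nbhs p E by exact: open_nbhs_nbhs.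
have [n] := @ltr_add_invr R 0 (e / 2) ltac:(by rewrite divr_gt0).
set del := n.+1%:R^-1; rewrite add0r => dele.
have del0 : 0 < del by rewrite invr_gt0 ltr0n.
have [q1] : exists q : rat, ratr q \in `](p.1 - del), (p.1 + del)[.
  by apply: rat_in_itvoo; lra.
have [q2] : exists q : rat, ratr q \in `](p.2 - del), (p.2 + del)[.
  by apply: rat_in_itvoo; lra.
rewrite !in_itv /= => /andP[a2 b2] /andP[a1 b1].
exists q1, q2, n; split.
  by split; rewrite /= in_itv /= -/del; apply/andP; split; lra.
move=> z [/=]; rewrite !in_itv /= -/del => /andP[c1 d1] /andP[c2 d2].
by apply: pE; split; rewrite /ball /= ltr_distl; apply/andP; split; lra.
Qed.

Lemma open_measurable_plane E : open E -> measurable E.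
Proof.
move=> oE.
pose B q1 q2 n := if `[< rat_box q1 q2 n `<=` E >] then rat_box q1 q2 n else set0.
have -> : E = \bigcup_q1 \bigcup_q2 \bigcup_n B q1 q2 n.
  apply/seteqP; split => [p Ep|p [q1 _ [q2 _ [n _]]]]; last first.
    by rewrite /B; case: asboolP => // + Bp; exact.
  have [q1 [q2 [n [Bp BE]]]] := open_rat_box_cover oE Ep.
  by exists q1 => //; exists q2 => //; exists n => //; rewrite /B; case: asboolP.
apply: bigcupT_measurable_rat => q1; apply: bigcupT_measurable_rat => q2.
apply: bigcupT_measurable => n; rewrite /B; case: asboolP => _ //.
by apply: measurableX; exact: measurable_itv.
Qed.

Lemma measurable_disk (x0 : R * R) (r : R) : measurable (disk x0 r).
Proof.
have msq (f : R * R -> R) (c : R) : measurable_fun setT f ->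
    measurable_fun setT (fun p => (f p - c) ^+ 2).
  move=> mf; apply: measurable_realfun.measurable_funX.
  exact: measurable_realfun.measurable_funB.
have := measurable_realfun.measurable_funD
  (msq _ x0.1 measurable_fst) (msq _ x0.2 measurable_snd).
move=> /(_ measurableT `]-oo, r ^+ 2[%classic (measurable_itv _)).
by rewrite setTI; congr measurable; apply/seteqP; split => p /=; rewrite in_itv.
Qed.

Lemma bounded2_leb2_lty E : bounded2 E -> measurable E -> (leb2 E < +oo)%E.
Proof.
move=> [M EM] mE; pose I := `[- M, M]%classic.
have EI : E `<=` I `*` I.
  by move=> p /EM[]; rewrite /I /= !in_itv /= -!ler_norml => -> ->.
have mI : measurable I by exact: measurable_itv.
apply: (@le_lt_trans _ _ (leb2 (I `*` I))).
  by apply: le_measure; rewrite ?inE //; exact: measurableX.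
have [m Im] : exists m : R, lebesgue_measure I = m%:E.
  by rewrite /I lebesgue_measure_itv; case: ifP; eexists.
have II : (lebesgue_measure I * lebesgue_measure I < +oo)%E.
  by rewrite Im -EFinM ltry.
by rewrite /leb2 product_measure1E.
Qed.

End plane_measurable.

Section disk_area.
Context (R : realType).

Definition half_chord (x0 : R * R) (r x : R) : R :=
  Num.sqrt (r ^+ 2 - (x - x0.1) ^+ 2).

Lemma xsection_disk x0 r x : xsection (disk x0 r) x =
  `](x0.2 - half_chord x0 r x), (x0.2 + half_chord x0 r x)[%classic.
Proof.
rewrite /xsection /disk /half_chord.
apply/seteqP; split => y /=; rewrite in_itv /=.
- move=> /set_mem /= yD.
  have t0 : 0 < r ^+ 2 - (x - x0.1) ^+ 2.
    by rewrite subr_gt0; apply: le_lt_trans yD; rewrite lerDl sqr_ge0.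
  by rewrite -ltr_distl -sqrtr_sqr ltr_sqrt // ltrBrDl.
- rewrite -ltr_distl => yD; apply/mem_set => /=.
  have t0 : 0 < r ^+ 2 - (x - x0.1) ^+ 2.
    by rewrite -sqrtr_gt0; apply: le_lt_trans yD.
  by move: yD; rewrite -sqrtr_sqr ltr_sqrt // ltrBrDl.
Qed.

Lemma leb2_disk_integral x0 r :
  leb2 (disk x0 r) = (\int[lebesgue_measure]_x (2 * half_chord x0 r x)%:E)%E.
Proof.
rewrite /leb2 /product_measure1 /=; apply: eq_integral => x _ /=.
rewrite xsection_disk lebesgue_measure_itv /= lte_fin.
have s0 : 0 <= half_chord x0 r x by exact: sqrtr_ge0.
case: ifPn => [_|]; first by rewrite -EFinB; congr EFin; ring.
rewrite -leNgt -subr_ge0 => s_le0.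
by rewrite (_ : half_chord x0 r x = 0) ?mulr0 //; lra.
Qed.

Definition chord_primitive (y : R) : R := y * Num.sqrt (1 - y ^+ 2) + asin y.

Let pihalf_ge0 : 0 <= pi / 2 :> R.
Proof. by rewrite divr_ge0 // pi_ge0. Qed.

Lemma chord_primitive1 : chord_primitive 1 = pi / 2.
Proof.
rewrite /chord_primitive expr1n subrr sqrtr0 mulr0 add0r.
rewrite -[in LHS]sin_pihalf sinK //.
by rewrite in_itv /= lexx andbT ge0_cp.
Qed.

Lemma chord_primitiveN1 : chord_primitive (-1) = - (pi / 2).
Proof.
rewrite /chord_primitive sqrrN expr1n subrr sqrtr0 mulr0 add0r.
by rewrite -[in LHS]sin_pihalf -sinN sinK // in_itv /= lexx ge0_cp.
Qed.

Lemma within_continuous_chord_primitive :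
  {within `[(-1), 1], continuous chord_primitive}.
Proof.
have asin_cont : {within `[(-1), 1], continuous (@asin R)}.
  have := @segment_can_le_continuous R (- (pi / 2)) (pi / 2) sin asin.
  rewrite sinN sin_pihalf; apply; first by rewrite ge0_cp.
    exact/continuous_subspaceT/continuous_sin.
  exact: sinK.
have -> : chord_primitive = (fun y => y * Num.sqrt (1 - y ^+ 2)) + asin by [].
move=> x; apply: continuousD; last exact: asin_cont.
apply: continuous_subspaceT => {}x.
have -> : (fun y : R => y * Num.sqrt (1 - y ^+ 2)) =
  id \* (fun y => Num.sqrt (1 - y ^+ 2)) by [].
apply: continuousM; first by move=> ?.
apply: continuous_comp; last exact: sqrt_continuous.
by apply: continuousB; [exact: cst_continuous|exact: exprn_continuous].
Qed.

Lemma is_derive_chord_primitive (y : R) : -1 < y < 1 ->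
  is_derive y 1 chord_primitive (2 * Num.sqrt (1 - y ^+ 2)).
Proof.
move=> yI; have q_gt0 : 0 < 1 - y ^+ 2.
  by rewrite subr_gt0 -real_normK ?num_real // expr_lt1 // ltr_norml.
set s : R := Num.sqrt (1 - y ^+ 2).
have s_gt0 : 0 < s by rewrite sqrtr_gt0.
have ds :
    is_derive y 1 (fun z => Num.sqrt (1 - z ^+ 2)) ((2 * s)^-1 * (- (2 * y))).
  apply: (is_derive1_comp (f := Num.sqrt) (g := fun z => 1 - z ^+ 2)).
    exact: is_derive1_sqrt.
  apply: is_derive_eq
    (is_deriveB (is_derive_cst (1 : R) y 1) (is_deriveX 2 (is_derive_id y 1))) _.
  by rewrite sub0r expr1 scaler1.
apply: is_derive_eq
  (is_deriveD (is_deriveM (is_derive_id y 1) ds) (is_derive1_asin yI)) _.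
have ss : s ^+ 2 = 1 - y ^+ 2 by rewrite sqr_sqrtr // ltW.
rewrite /= -/s !scaler1 /GRing.scale /=.
have s_neq0 : s != 0 by rewrite gt_eqF.
transitivity (s + (1 - y ^+ 2) / s); first by field.
by rewrite -ss; field.
Qed.

Lemma half_chord_eq0 (x0 : R * R) (r x : R) : 0 <= r -> r <= `|x - x0.1| ->
  half_chord x0 r x = 0.
Proof.
move=> r0 rx; apply/eqP.
rewrite sqrtr_eq0 subr_le0 -(real_normK (num_real (x - x0.1))).
by rewrite ler_pXn2r ?nnegrE.
Qed.

Lemma continuous_half_chord (x0 : R * R) (r : R) : continuous (half_chord x0 r).
Proof.
have -> : half_chord x0 r = Num.sqrt \o (fun x => r ^+ 2 - (x - x0.1) ^+ 2) by [].
move=> x; apply: continuous_comp; last exact: sqrt_continuous.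
apply: continuousB; first exact: cst_continuous.
apply: (@continuous_comp _ _ _ (fun x : R => x - x0.1) (fun y : R => y ^+ 2)).
  by apply: continuousB => //; exact: cst_continuous.
exact: exprn_continuous.
Qed.

Lemma is_derive_disk_primitive (x0 : R * R) (r x : R) : 0 < r ->
  x0.1 - r < x < x0.1 + r ->
  is_derive x 1 (fun x => r ^+ 2 * chord_primitive (r^-1 * (x - x0.1)))
    (2 * half_chord x0 r x).
Proof.
move=> r0 xI; set a := x0.1; set h := fun x => r^-1 * (x - a).
have hI : -1 < h x < 1.
  by rewrite /h mulrC ltr_pdivrMr // ltr_pdivlMr // mulN1r mul1r; lra.
have dh : is_derive x 1 h (r^-1 *: (1 - 0)).
  exact: is_deriveZ (is_deriveB (is_derive_id x 1) (is_derive_cst a x 1)).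
apply: is_derive_eq
  (is_deriveZ (r ^+ 2) (is_derive1_comp (is_derive_chord_primitive hI) dh)) _.
rewrite /half_chord -/a.
have -> : r ^+ 2 - (x - a) ^+ 2 = r ^+ 2 * (1 - h x ^+ 2).
  by rewrite /h; field; rewrite gt_eqF.
rewrite /h sqrtrM ?sqr_ge0 // sqrtr_sqr ger0_norm ?ltW //.
by rewrite /GRing.scale /= subr0 mulr1; field; rewrite gt_eqF.
Qed.

Lemma integral_half_chord_itv (x0 : R * R) (r : R) : 0 <= r ->
  (\int[lebesgue_measure]_x (2 * half_chord x0 r x)%:E)%E =
  (\int[lebesgue_measure]_(x in `[(x0.1 - r)%R, (x0.1 + r)%R])
     (2 * half_chord x0 r x)%:E)%E.
Proof.
move=> r0; rewrite [RHS]integral_mkcond.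
apply: eq_integral => x _; rewrite patchE.
case: ifPn => // /negP xI; rewrite half_chord_eq0 ?mulr0 //.
rewrite leNgt; apply/negP => xr; apply: xI; move: xr.
by rewrite ltr_distl inE /= in_itv /= => /andP[? ?]; apply/andP; split; lra.
Qed.

Lemma integral_half_chord (x0 : R * R) (r : R) : 0 < r ->
  (\int[lebesgue_measure]_x (2 * half_chord x0 r x)%:E)%E = (pi * r ^+ 2)%:E.
Proof.
move=> r0; rewrite integral_half_chord_itv ?ltW //.
set a := x0.1; set c := a - r; set d := a + r.
have cd : c < d by rewrite /c /d; lra.
pose h x := r^-1 * (x - a).
pose G y := r ^+ 2 * chord_primitive y.
have hc : h c = -1 by rewrite /h /c; field; rewrite gt_eqF.
have hd : h d = 1 by rewrite /h /d; field; rewrite gt_eqF.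
have h_incr : {in `[c, d] &, {homo h : x y / x < y}}.
  by move=> x y _ _ xy; rewrite /h ltr_pM2l ?invr_gt0 // ltrD2r.
have h_cont : continuous h.
  have -> : h = cst r^-1 \* (fun x => x - a) by [].
  move=> x; apply: continuousM; first exact: cst_continuous.
  by apply: continuousB; [move=> ?|exact: cst_continuous].
have N11 : -1 < 1 :> R by lra.
have [_ G_right G_left] := (continuous_within_itvP _ N11).1
  within_continuous_chord_primitive.
rewrite (@continuous_FTC2 _ (fun x => 2 * half_chord x0 r x) (G \o h) _ _ cd).
- rewrite /= hc hd /G chord_primitiveN1 chord_primitive1 -EFinB.
  by congr EFin; field.
- apply: continuous_subspaceT => x.
  have -> : (fun x => 2 * half_chord x0 r x) = cst 2 \* half_chord x0 r by [].
  by apply: continuousM; [exact: cst_continuous|exact: continuous_half_chord].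
- split.
  + move=> x /[!in_itv] /= xI.
    by case: (is_derive_disk_primitive r0 xI).
  + apply: (@increasing_cvg_at_right_comp R h G c (BRight d)) => //.
      exact: cvg_at_right_filter (h_cont c).
    by rewrite /comp hc /G; exact: cvgMl_tmp.
  + apply: (@increasing_cvg_at_left_comp R h G (BLeft c) d) => //.
      exact: cvg_at_left_filter (h_cont d).
    by rewrite /comp hd /G; exact: cvgMl_tmp.
- move=> x /[!in_itv] /= xI; rewrite derive1E.
  by case: (is_derive_disk_primitive r0 xI).
Qed.

Lemma leb2_disk (x0 : R * R) (r : R) : 0 <= r ->
  leb2 (disk x0 r) = (pi * r ^+ 2)%:E.
Proof.
rewrite le_eqVlt => /predU1P[<-|r0]; last first.
  by rewrite leb2_disk_integral integral_half_chord.
rewrite leb2_disk_integral expr0n mulr0.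
under eq_integral do rewrite half_chord_eq0 ?mulr0 //.
exact: integral0.
Qed.

End disk_area.

Lemma ge0_fine_le (R : realDomainType) (x : \bar R) (b : R) :
  (0 <= x)%E -> (x <= b%:E)%E -> fine x <= b.
Proof. by case: x => [x _|//|//]; rewrite lee_fin. Qed.

Lemma symdiffE T (A B : set T) : symdiff A B = A `+` B.
Proof. by []. Qed.

Section asymmetry.
Context (R : realType).
Implicit Types A : set (R * R).

Lemma exists_radius (t : R) : 0 <= t -> exists2 r, 0 <= r & pi * r ^+ 2 = t.
Proof.
move=> t0; exists (Num.sqrt (t / pi)); first exact: sqrtr_ge0.
by rewrite sqr_sqrtr ?divr_ge0 ?pi_ge0 // mulrC divfK // gt_eqF // pi_gt0.
Qed.

Lemma fine_leb2_ge0 A : 0 <= fine (leb2 A).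
Proof. exact/fine_ge0/measure_ge0. Qed.

Lemma asym_le A x0 r : 0 <= r -> pi * r ^+ 2 = fine (leb2 A) ->
  asym A <= fine (leb2 (symdiff A (disk x0 r))) / fine (leb2 A).
Proof.
move=> r0 rA; apply: ge_inf; last by exists x0, r.
by exists 0 => _ [y0 [s [_ [_ ->]]]]; rewrite divr_ge0 // fine_leb2_ge0.
Qed.

Lemma asym_ge A b :
  (forall x0 r, 0 <= r -> pi * r ^+ 2 = fine (leb2 A) ->
    b <= fine (leb2 (symdiff A (disk x0 r))) / fine (leb2 A)) ->
  b <= asym A.
Proof.
move=> Ab; apply: lb_le_inf => [|_ [x0 [r [r0 [rA ->]]]]]; last exact: Ab.
have [r r0 rA] := exists_radius (fine_leb2_ge0 A).
by exists (fine (leb2 (symdiff A (disk 0 r))) / fine (leb2 A)), 0, r.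
Qed.

Lemma asym_ge0 A : 0 <= asym A.
Proof. by apply: asym_ge => x0 r _ _; rewrite divr_ge0 // fine_leb2_ge0. Qed.

Lemma asym_le2 A : measurable A -> asym A <= 2.
Proof.
move=> mA; have [r r0 rA] := exists_radius (fine_leb2_ge0 A).
apply: le_trans (asym_le 0 r0 rA) _; move: rA; set e := fine (leb2 A) => rA.
have [->|e_neq0] := eqVneq e 0; first by rewrite invr0 mulr0.
have Ae : leb2 A = e%:E.
  by move: e_neq0; rewrite /e; case: (leb2 A) => //=; rewrite eqxx.
rewrite ler_pdivrMr; last by rewrite lt_def e_neq0 fine_leb2_ge0.
apply: ge0_fine_le; rewrite // symdiffE.
apply: le_trans (measureY_le (@leb2 R) mA (measurable_disk 0 r)) _.
(* The general measure lemmas state their conclusions through the measure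
   structure of leb2; converting back exposes leb2 to rewriting. *)
by rewrite -![Measure.sort _ _]/(leb2 _) leb2_disk // rA Ae -EFinD lee_fin; lra.
Qed.

End asymmetry.

Section concentric_disks.
Context (R : realType).
Implicit Types E U : set (R * R).

Lemma leb2_fineK E : (leb2 E < +oo)%E -> leb2 E = (fine (leb2 E))%:E.
Proof. by move=> Efin; rewrite fineK // ge0_fin_numE // measure_ge0. Qed.

Lemma leb2_symdiff_concentric_le E U x0 r r' :
  measurable E -> measurable U -> U `<=` E -> (leb2 E < +oo)%E ->
  0 <= r -> pi * r ^+ 2 = fine (leb2 U) ->
  0 <= r' -> pi * r' ^+ 2 = fine (leb2 E) ->
  fine (leb2 (symdiff E (disk x0 r'))) <=
    2 * (fine (leb2 E) - fine (leb2 U)) + fine (leb2 (symdiff U (disk x0 r))).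
Proof.
move=> mE mU UE Efin r0 rU r'0 r'E; rewrite !symdiffE.
have UleE : (leb2 U <= leb2 E)%E by apply: le_measure; rewrite ?inE.
have Ufin := le_lt_trans UleE Efin.
have Ee := leb2_fineK Efin; have Uu := leb2_fineK Ufin.
move: UleE rU r'E Ee Uu; set e := fine (leb2 E); set u := fine (leb2 U).
move=> + rU r'E Ee Uu; rewrite Ee Uu lee_fin => ue.
have Dr : leb2 (disk x0 r) = u%:E by rewrite leb2_disk // rU.
have Dr' : leb2 (disk x0 r') = e%:E by rewrite leb2_disk // r'E.
have DD : disk x0 r `<=` disk x0 r'.
  move=> p; rewrite /disk /= => /lt_le_trans; apply.
  by rewrite -(ler_pM2l (pi_gt0 R)) rU r'E.
have mD := measurable_disk x0 r; have mD' := measurable_disk x0 r'.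
have UDfin : (leb2 (U `+` disk x0 r) <= (u + u)%:E)%E.
  apply: le_trans (measureY_le (@leb2 R) mU mD) _.
  by rewrite -![Measure.sort _ _]/(leb2 _) Uu Dr EFinD.
apply: ge0_fine_le => //.
apply: le_trans (measureY_nested (mu := @leb2 R) mE mU mD' mD UE DD Efin _) _.
  by rewrite -[Measure.sort _ _]/(leb2 _) Dr' ltry.
rewrite -![Measure.sort _ _]/(leb2 _) Ee Uu Dr Dr'.
rewrite -(fineK (x := leb2 (U `+` disk x0 r))); last first.
  by rewrite ge0_fin_numE ?measure_ge0 // (le_lt_trans UDfin) ?ltry.
by rewrite -!EFinB -!EFinD lee_fin; lra.
Qed.

End concentric_disks.

Unset Implicit Arguments.

Theorem lemma4p4 (R : realType) (E : set (R * R)) :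
  open E -> connected E -> E !=set0 -> bounded2 E ->
  forall U : set (R * R), measurable U -> U `<=` E ->
  (leb2 E * (1 - asym E / 4)%:E <= leb2 U)%E ->
  asym E / 4 <= asym U.
Proof.
move=> oE _ _ bE U mU UE.
have mE := open_measurable_plane oE.
have Efin := bounded2_leb2_lty bE mE.
have UleE : (leb2 U <= leb2 E)%E by apply: le_measure; rewrite ?inE.
have Ufin := le_lt_trans UleE Efin.
have [r' r'0 r'E] := exists_radius (fine_leb2_ge0 E).
have aE := asym_le 0 r'0 r'E.
move: UleE; rewrite (leb2_fineK Efin) (leb2_fineK Ufin) -EFinM !lee_fin.
move: r'E aE; set e := fine (leb2 E); set u := fine (leb2 U); set a := asym E.
move=> r'E aE ue hU.
have a0 : 0 <= a := asym_ge0 E.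
have [e0|e_neq0] := eqVneq e 0.
  (* x / 0 = 0, so a null set has asymmetry 0. *)
  move: aE; rewrite e0 invr0 mulr0 => a_le0.
  by rewrite (_ : a = 0) ?mul0r ?asym_ge0 //; lra.
have e_gt0 : 0 < e by rewrite lt_def e_neq0 fine_leb2_ge0.
have a2 := asym_le2 mE.
have u_gt0 : 0 < u by nra.
apply: asym_ge => x0 r r0 rU.
have := leb2_symdiff_concentric_le x0 mE mU UE Efin r0 rU r'0 r'E.
move: (asym_le x0 r'0 r'E); rewrite -/e -/u -/a ler_pdivlMr // => aw wx.
rewrite ler_pdivlMr //; nra.
Qed.
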